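(* Let $L$ be a distributive lattice, let $B$ be the Boolean algebra generated by $L$, let $n\ge1$, and for each $i\in[n]$ let $a_i,b_i\in L$ with $a_i<b_i$. For $I\subseteq[n]$ let $\widehat{\mathbf e}_I\in L^n$ have $i$-th component $b_i$ if $i\in I$ and $a_i$ if $i\notin I$, and let $D=\{\widehat{\mathbf e}_I: I\subseteq[n]\}$. Let $f\colon D\to L$ be monotone and satisfy $$f(\widehat{\mathbf e}_{I\cup\{k\}})\wedge a_k\le f(\widehat{\mathbf e}_I)\le f(\widehat{\mathbf e}_{I\setminus\{k\}})\vee b_k\quad\text{for all } I\subseteq[n],\ k\in[n].$$ Let $p$ be the $n$-ary polynomial function over $B$ given by $p(\mathbf x)=\bigvee_{I\subseteq[n]}(c_I\wedge\bigwedge_{i\in I}x_i)$ for a monotone system of coefficients $c_I\in B$ ($I\subseteq[n]$). Then the following are equivalent: (i) $p|_D=f$; (ii) $c_I^-\le c_I\le c_I^+$ for all $I\subseteq[n]$; (iii) $p^-(\mathbf x)\le p(\mathbf x)\le p^+(\mathbf x)$ for all $\mathbf x\in L^n$.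
   Context: $B$ is the Boolean algebra generated by $L$ in which $L$ embeds (Birkhoff–Priestley), with bounds $0,1$ and complement $x\mapsto x'$. A system of coefficients is monotone if $I\subseteq J$ implies $c_I\le c_J$. $f$ monotone means $I\subseteq J\Rightarrow f(\widehat{\mathbf e}_I)\le f(\widehat{\mathbf e}_J)$. Define $c_I^-=f(\widehat{\mathbf e}_I)\wedge\bigwedge_{i\notin I}a_i'$ and $c_I^+=f(\widehat{\mathbf e}_I)\vee\bigvee_{i\in I}b_i'$ in $B$, and let $p^-(\mathbf x)=\bigvee_{I\subseteq[n]}(c_I^-\wedge\bigwedge_{i\in I}x_i)$, $p^+(\mathbf x)=\bigvee_{I\subseteq[n]}(c_I^+\wedge\bigwedge_{i\in I}x_i)$, polynomial functions over $B$. *)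

From HB Require Import structures.
From mathcomp Require Import all_boot all_order.
Set Implicit Arguments. Unset Strict Implicit. Unset Printing Implicit Defensive.
Import Order.Theory.
Local Open Scope order_scope.

Definition lattice_embedding (dL dB : Order.disp_t) (L : distrLatticeType dL)
  (B : ctbDistrLatticeType dB) (h : L -> B) : Prop :=
  [/\ injective h,
      (forall x y, h (x `&` y) = h x `&` h y) &
      (forall x y, h (x `|` y) = h x `|` h y)].

Definition generates_boolean (dL dB : Order.disp_t) (L : distrLatticeType dL)
  (B : ctbDistrLatticeType dB) (h : L -> B) : Prop :=
  forall S : B -> Prop,
    (forall x, S (h x)) -> S \bot -> S \top ->
    (forall x y, S x -> S y -> S (x `&` y)) ->
    (forall x y, S x -> S y -> S (x `|` y)) ->
    (forall x, S x -> S (~` x)) ->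
    forall y, S y.

Definition ehat (dL : Order.disp_t) (L : distrLatticeType dL) (n : nat)
  (a b : 'I_n -> L) (I : {set 'I_n}) : 'I_n -> L :=
  fun i => if i \in I then b i else a i.

Definition polyfun (dB : Order.disp_t) (B : ctbDistrLatticeType dB) (n : nat)
  (c : {set 'I_n} -> B) (x : 'I_n -> B) : B :=
  \join_(I : {set 'I_n}) (c I `&` \meet_(i in I) x i).

Definition monotone_coeffs (dB : Order.disp_t) (B : ctbDistrLatticeType dB) (n : nat)
  (c : {set 'I_n} -> B) : Prop :=
  forall I J : {set 'I_n}, I \subset J -> c I <= c J.

(* c_I^- and c_I^+ ; fI = f(\hat e_I) *)
Definition cminus (dL dB : Order.disp_t) (L : distrLatticeType dL)
  (B : ctbDistrLatticeType dB) (h : L -> B) (n : nat) (a : 'I_n -> L)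
  (f : {set 'I_n} -> L) (I : {set 'I_n}) : B :=
  h (f I) `&` \meet_(i | i \notin I) ~` (h (a i)).

Definition cplus (dL dB : Order.disp_t) (L : distrLatticeType dL)
  (B : ctbDistrLatticeType dB) (h : L -> B) (n : nat) (b : 'I_n -> L)
  (f : {set 'I_n} -> L) (I : {set 'I_n}) : B :=
  h (f I) `|` \join_(i in I) ~` (h (b i)).

From HB Require Import structures.
From mathcomp Require Import all_boot all_order.
Import Order.Theory.
Set Implicit Arguments.
Unset Strict Implicit.
Unset Printing Implicit Defensive.

Local Open Scope order_scope.

(* For (iii) => (i) it suffices to show
   p^+(e_J) <= f(e_J) <= p^-(e_J).  Both bounds come from one shrinking principle:
   the two halves of the hypothesis on f say that meeting f(e_I) with a_k, resp.
   with b_k', stays below f(e_(I\k)), so meeting f(e_I) with something below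
   a_i (resp. b_i') for every i in S stays below f(e_(I\S)).  The upper bound applies
   this to the terms of p^+; the lower bound splits f(e_J) along the minterms of the
   point e_J, the minterm indexed by K lying below the K-term of p^-. *)

Section ShrinkSet.
Variables (d : Order.disp_t) (T : latticeType d) (n : nat).
Variables (G : {set 'I_n} -> T) (g : 'I_n -> T).
Hypothesis meet_le_setD1 : forall I k, G I `&` g k <= G (I :\ k).

Lemma meet_le_setD (S I : {set 'I_n}) y :
  (forall i, i \in S -> y <= g i) -> G I `&` y <= G (I :\: S).
Proof.
move=> yg; rewrite -[S in G (_ :\: S)]set_enum.
have {yg} : forall i, i \in enum S -> y <= g i by move=> i; rewrite mem_enum; exact: yg.
elim: (enum S) I => [|k s IH] I yg; first by rewrite set_nil setD0 leIl.
have yk : y <= g k by apply: yg; rewrite mem_head.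
rewrite set_cons -setDDl; apply: le_trans (IH (I :\ k) _); last first.
  by move=> i si; apply: yg; rewrite inE si orbT.
rewrite lexI leIr andbT; apply: le_trans (meet_le_setD1 I k).
exact: leI2.
Qed.

End ShrinkSet.

Section BooleanFacts.
Variables (d : Order.disp_t) (B : ctbDistrLatticeType d).

(* [bigA_distr_bigA] does not find the generic distributive-lattice instance on [B]. *)
HB.instance Definition _ :=
  Monoid.isAddLaw.Build B (@Order.meet _ B) (@Order.join _ B) meetUl meetUr.

Lemma le_joinC_of_meet (x y z : B) : x `&` y <= z -> x <= z `|` ~` y.
Proof.
move=> xyz; rewrite -[x]meetx1 -(joinxC y) meetUr.
by apply: leU2 => //; apply: leIr.
Qed.

Definition minterm n (u : 'I_n -> B) (K : {set 'I_n}) : B :=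
  \meet_(i in K) u i `&` \meet_(i | i \notin K) ~` u i.

Lemma joins_minterm n (u : 'I_n -> B) : \join_(K : {set 'I_n}) minterm u K = \top.
Proof.
apply/eqP; rewrite eq_le lex1 /=.
have -> : \top = \meet_(i : 'I_n) \join_(j : bool) (if j then u i else ~` u i) :> B.
  by symmetry; apply: big1 => i _; rewrite big_bool /= joinxC.
rewrite bigA_distr_bigA; apply/joinsP => f _.
apply: (joins_min (j := [set i | f i])) => //; rewrite lexI.
by apply/andP; split; apply/meetsP => i; rewrite inE => fi;
  apply: (meets_max (j := i)) => //; case: (f i) fi.
Qed.

Lemma polyfun_le_coeffs n (c c' : {set 'I_n} -> B) x :
  (forall I, c I <= c' I) -> polyfun c x <= polyfun c' x.
Proof.
by move=> cc'; apply/joinsP => I _; apply: (joins_min (j := I)) => //; apply: leI2.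
Qed.

End BooleanFacts.

Section Interpolation.
Variables (dL dB : Order.disp_t) (L : distrLatticeType dL) (B : ctbDistrLatticeType dB).
Variables (h : L -> B) (n : nat) (a b : 'I_n -> L).
Hypothesis h_meet : {morph h : x y / x `&` y}.
Hypothesis h_join : {morph h : x y / x `|` y}.
Hypothesis a_le_b : forall i, a i <= b i.

Local Notation hat J := (fun i => h (ehat a b J i)).

Lemma h_mono : {homo h : x y / x <= y}.
Proof. by move=> x y; rewrite !leEmeet -h_meet => /eqP ->. Qed.

Lemma a_le_ehat J i : a i <= ehat a b J i.
Proof. by rewrite /ehat; case: ifP. Qed.

Lemma ehat_le_b J i : ehat a b J i <= b i.
Proof. by rewrite /ehat; case: ifP. Qed.

Lemma polyfun_ehat_meet_le_coeff (c : {set 'I_n} -> B) I :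
  monotone_coeffs c -> polyfun c (hat I) `&` \meet_(i | i \notin I) ~` h (a i) <= c I.
Proof.
move=> cmono; rewrite /polyfun big_distrl /=; apply/joinsP => J _.
have [JI | /subsetPn [j jJ jI]] := boolP (J \subset I).
  by apply: leIxl; apply: leIxl; apply: cmono.
have aj : c J `&` \meet_(i in J) h (ehat a b I i) <= h (a j).
  by apply: leIxr; apply: (meets_max (j := j)) => //; rewrite /ehat (negbTE jI).
apply: le_trans (leI2 aj (meets_inf (j := j) _ jI)) _.
by rewrite meetxC le0x.
Qed.

Lemma coeff_le_polyfun_ehat_join (c : {set 'I_n} -> B) I :
  c I <= polyfun c (hat I) `|` \join_(i in I) ~` h (b i).
Proof.
rewrite -compl_meets; apply: le_joinC_of_meet.
apply: (joins_min (j := I)) => //; apply: leI2 => //.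
apply/meetsP => i iI; apply: (meets_max (j := i)) => //.
by rewrite /ehat iI.
Qed.

Variable F : {set 'I_n} -> L.
Hypothesis Fmono : forall I J : {set 'I_n}, I \subset J -> F I <= F J.
Hypothesis Fcond : forall (I : {set 'I_n}) (k : 'I_n),
  F (k |: I) `&` a k <= F I /\ F I <= F (I :\ k) `|` b k.

Lemma hF_meet_a_le I k : h (F I) `&` h (a k) <= h (F (I :\ k)).
Proof.
rewrite -h_meet; apply: h_mono; apply: le_trans (Fcond (I :\ k) k).1.
apply: leI2 => //; apply: Fmono.
by apply/subsetP => x; rewrite !inE; case: (x == k).
Qed.

Lemma hF_meet_Cb_le I k : h (F I) `&` ~` h (b k) <= h (F (I :\ k)).
Proof.
have := h_mono (Fcond I k).2; rewrite h_join => Fb.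
apply: le_trans (leI2 Fb (lexx _)) _.
by rewrite meetUl leUx leIl meetxC le0x.
Qed.

Lemma hF_setD_setD_le I J : h (F (I :\: (I :\: J))) <= h (F J).
Proof.
apply/h_mono/Fmono/subsetP => x; rewrite !inE.
by case: (x \in J); case: (x \in I).
Qed.

Lemma hF_meet_le_ehat (I J : {set 'I_n}) y :
  (forall i, i \in I -> y <= h (ehat a b J i)) -> h (F I) `&` y <= h (F J).
Proof.
move=> yJ; apply: le_trans (hF_setD_setD_le I J).
apply: (meet_le_setD hF_meet_a_le) => i; rewrite inE => /andP[iJ iI].
by have := yJ i iI; rewrite /ehat (negbTE iJ).
Qed.

Lemma hF_meet_le_Cehat (J K : {set 'I_n}) y :
  (forall i, i \notin K -> y <= ~` h (ehat a b J i)) -> h (F J) `&` y <= h (F K).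
Proof.
move=> yK; apply: le_trans (hF_setD_setD_le J K).
apply: (meet_le_setD hF_meet_Cb_le) => i; rewrite inE => /andP[iK iJ].
by have := yK i iK; rewrite /ehat iJ.
Qed.

Lemma polyfun_cplus_ehat_le J : polyfun (cplus h b F) (hat J) <= h (F J).
Proof.
apply/joinsP => I _; rewrite /cplus meetUl leUx.
apply/andP; split; first by apply: hF_meet_le_ehat => i iI; apply: meets_inf.
set M := \meet_(i in I) _.
have bM : \join_(i in I) ~` h (b i) <= ~` M.
  apply/joinsP => i iI; rewrite leC; apply: (meets_max (j := i)) => //.
  exact/h_mono/ehat_le_b.
by apply: le_trans (leI2 bM (lexx M)) _; rewrite meetCx.
Qed.

Lemma le_polyfun_cminus_ehat J : h (F J) <= polyfun (cminus h a F) (hat J).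
Proof.
rewrite -[h (F J)]meetx1 -(joins_minterm (hat J)) big_distrr /=.
apply/joinsP => K _; apply: (joins_min (j := K)) => //.
rewrite /cminus !lexI; apply/andP; split; first (apply/andP; split).
- by apply: hF_meet_le_Cehat => i iK; apply: leIxr; apply: meets_inf.
- apply: leIxr; apply: leIxr; apply/meetsP => i iK.
  by apply: (meets_max (j := i)) => //; rewrite leC; apply/h_mono/a_le_ehat.
- by apply: leIxr; apply: leIl.
Qed.

End Interpolation.

Theorem theorem3p5 (dL dB : Order.disp_t) (L : distrLatticeType dL)
  (B : ctbDistrLatticeType dB) (h : L -> B)
  (hemb : lattice_embedding h) (hgen : generates_boolean h)
  (n : nat) (hn : (0 < n)%N) (a b : 'I_n -> L) (hab : forall i, a i < b i)
  (F : {set 'I_n} -> L)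
  (Fmono : forall I J : {set 'I_n}, I \subset J -> F I <= F J)
  (Fcond : forall (I : {set 'I_n}) (k : 'I_n),
      F (k |: I) `&` a k <= F I /\ F I <= F (I :\ k) `|` b k)
  (c : {set 'I_n} -> B) (cmono : monotone_coeffs c) :
  [<-> (forall I : {set 'I_n}, polyfun c (fun i => h (ehat a b I i)) = h (F I));
       (forall I : {set 'I_n}, cminus h a F I <= c I /\ c I <= cplus h b F I);
       (forall x : 'I_n -> L,
          polyfun (cminus h a F) (fun i => h (x i)) <= polyfun c (fun i => h (x i)) /\
          polyfun c (fun i => h (x i)) <= polyfun (cplus h b F) (fun i => h (x i)))].
Proof.
case: hemb => _ h_meet h_join.
have a_le_b i : a i <= b i by apply: ltW.
tfae.
- move=> pF I; rewrite /cminus /cplus -pF; split.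
    exact: polyfun_ehat_meet_le_coeff.
  exact: coeff_le_polyfun_ehat_join.
- by move=> cbounds x; split; apply: polyfun_le_coeffs => I; case: (cbounds I).
- move=> pbounds J; apply/le_anti/andP; split.
    by apply: le_trans (pbounds _).2 _; apply: polyfun_cplus_ehat_le.
  by apply: le_trans _ (pbounds _).1; apply: le_polyfun_cminus_ehat.
Qed.
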